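(* Let $G$ be a non-complete double-critical $k$-chromatic graph and let $xy\in E(G)$. If $A(xy)$ is non-empty, then the induced subgraph $G[A(xy)]$ has no isolated vertices, i.e. $\delta(G[A(xy)])\ge 1$. Similarly, if $C(xy)$ is non-empty, then $\delta(G[C(xy)])\ge 1$.
   Context: All graphs are finite and simple. A graph $G$ is (vertex-)critical if $\chi(G-v)<\chi(G)$ for every vertex $v\in V(G)$. A critical graph $G$ is double-critical if $\chi(G-x-y)\le\chi(G)-2$ for every edge $xy\in E(G)$. For an edge $xy$, $A(xy):=N(x)\setminus N[y]$ and $C(xy):=N(y)\setminus N[x]$, where $N(v)$ is the open and $N[v]=N(v)\cup\{v\}$ the closed neighbourhood. *)

From mathcomp Require Import all_boot.
Set Implicit Arguments. Unset Strict Implicit. Unset Printing Implicit Defensive.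

Definition simple_graph (T : finType) (e : rel T) : Prop :=
  symmetric e /\ irreflexive e.

Definition colorable (T : finType) (e : rel T) (S : {set T}) (k : nat) : bool :=
  [exists f : {ffun T -> 'I_k},
     [forall x in S, forall y in S, e x y ==> (f x != f y)]].

Lemma colorable_card (T : finType) (e : rel T) (S : {set T}) :
  irreflexive e -> exists k, colorable e S k.
Proof.
move=> irr; exists #|T|; apply/existsP.
exists [ffun x => enum_rank x]; apply/forallP => x; apply/implyP => _.
apply/forallP => y; apply/implyP => _; apply/implyP => exy.
rewrite !ffunE; apply/negP => /eqP /enum_rank_inj exy'.
by move: exy; rewrite exy' irr.
Qed.

(* Chromatic number of the induced subgraph G[S]: least k such that G[S] is
   k-colourable, found by searching k = 0,1,...,#|T| (find returns the index,
   which equals k in iota 0).  By colorable_card, for irreflexive e a k <= #|T|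
   always exists, so this is the true chromatic number. *)
Definition chi (T : finType) (e : rel T) (S : {set T}) : nat :=
  let P := fun k => colorable e S k in
  find P (iota 0 #|T|.+1).

Definition chiG (T : finType) (e : rel T) : nat := chi e [set: T].

Definition nbhd (T : finType) (e : rel T) (v : T) : {set T} := [set u | e v u].
Definition cnbhd (T : finType) (e : rel T) (v : T) : {set T} := v |: nbhd e v.

Definition critical (T : finType) (e : rel T) : Prop :=
  forall v : T, chi e [set~ v] < chiG e.

Definition double_critical (T : finType) (e : rel T) : Prop :=
  critical e /\
  forall x y : T, e x y -> chi e (~: [set x; y]) <= chiG e - 2.

Definition complete (T : finType) (e : rel T) : Prop :=
  forall x y : T, x != y -> e x y.

Definition Aset (T : finType) (e : rel T) (x y : T) : {set T} :=
  nbhd e x :\: cnbhd e y.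
Definition Cset (T : finType) (e : rel T) (x y : T) : {set T} :=
  nbhd e y :\: cnbhd e x.

Definition no_isolated (T : finType) (e : rel T) (S : {set T}) : Prop :=
  forall v, v \in S -> exists2 u, u \in S & e v u.

From mathcomp Require Import all_boot.
Set Implicit Arguments. Unset Strict Implicit. Unset Printing Implicit Defensive.

(* Suppose a in A(xy) has no neighbour in A(xy).  Colour G - x - a with
   k - 2 colours and put c := colour of y.  Give a the colour c, move every
   neighbour of a coloured c to a fresh colour, and give x that fresh colour
   too.  The recoloured vertices form an independent set (they all had colour
   c), and x is adjacent to none of them: such a common neighbour v of x and a
   is not y (a is not adjacent to y) and not adjacent to y (it shares y's
   colour), so v would be a neighbour of a inside A(xy).  This colours G with
   k - 1 colours. *)

Section Colourings.

Variables (T : finType) (e : rel T).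

Lemma colorableP (S : {set T}) (k : nat) :
  reflect (exists2 f : T -> nat, (forall v, f v < k) &
             {in S &, forall u v, e u v -> f u != f v})
          (colorable e S k).
Proof.
apply: (iffP existsP) => [[f /forall_inP fP] | [f fk fP]].
  exists (fun v => nat_of_ord (f v)) => [v | u v uS vS euv]; first exact: ltn_ord.
  by have /forall_inP/(_ v vS) := fP u uS; rewrite euv.
exists [ffun v => Ordinal (fk v)]; apply/forall_inP => u uS.
apply/forall_inP => v vS; apply/implyP => euv; rewrite !ffunE.
by apply: contra (fP u v uS vS euv) => /eqP [->].
Qed.

Lemma colorable_le (S : {set T}) (m n : nat) :
  m <= n -> colorable e S m -> colorable e S n.
Proof.
move=> le_mn /colorableP [f fm fP]; apply/colorableP.
by exists f => // v; exact: leq_trans (fm v) le_mn.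
Qed.

Lemma chi_min (S : {set T}) (m : nat) : colorable e S m -> chi e S <= m.
Proof.
move=> cm; rewrite /chi; case: (leqP m #|T|) => [le_mT | lt_Tm].
  rewrite leqNgt; apply/negP => /(before_find 0).
  by rewrite nth_iota ?ltnS // add0n cm.
by apply: leq_trans (find_size _ _) _; rewrite size_iota.
Qed.

Lemma colorable_cardT (S : {set T}) : irreflexive e -> colorable e S #|T|.
Proof.
move=> e_irr; apply/colorableP; exists (fun v => nat_of_ord (enum_rank v)).
  by move=> v; exact: ltn_ord.
move=> u v _ _ euv; apply: contraTneq euv => /val_inj/enum_rank_inj ->.
by rewrite e_irr.
Qed.

Lemma chi_colorable (S : {set T}) : irreflexive e -> colorable e S (chi e S).
Proof.
move=> e_irr; rewrite /chi.
have has_col : has (colorable e S) (iota 0 #|T|.+1).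
  apply/hasP; exists #|T|; first by rewrite mem_iota add0n ltnSn.
  exact: colorable_cardT.
move: (has_col); rewrite has_find size_iota => lt_find.
by have := nth_find 0 has_col; rewrite nth_iota.
Qed.

Hypotheses (e_sym : symmetric e) (e_irr : irreflexive e).

Lemma colorable_recolour (x a : T) (m c : nat) (f : T -> nat) :
  x != a -> c < m -> (forall v, f v < m) ->
  {in ~: [set x; a] &, forall u v, e u v -> f u != f v} ->
  (forall v, v \in ~: [set x; a] -> e x v -> e a v -> f v != c) ->
  colorable e [set: T] m.+1.
Proof.
move=> neq_xa lt_cm fm fP common.
pose h v := if v == x then m else if v == a then c
            else if e a v && (f v == c) then m else f v.
have outside v : v != x -> v != a -> v \in ~: [set x; a].
  by move=> vx va; rewrite !inE negb_or vx va.
have hx : h x = m by rewrite /h eqxx.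
have ha : h a = c by rewrite /h eqxx eq_sym (negbTE neq_xa).
have nbr_x v : e x v -> h v != m.
  move=> exv; have vx : v != x by apply: contraTneq exv => ->; rewrite e_irr.
  rewrite /h (negbTE vx).
  case: ifP => [_ | /negbT va]; first by rewrite (ltn_eqF lt_cm).
  case: ifP => [/andP [eav /eqP fvc] | _]; last by rewrite (ltn_eqF (fm v)).
  by move: (common v (outside v vx va) exv eav); rewrite fvc eqxx.
have nbr_a v : e a v -> h v != c.
  move=> eav; have va : v != a by apply: contraTneq eav => ->; rewrite e_irr.
  rewrite /h (negbTE va) eav /=; case: ifP => _; first by rewrite (gtn_eqF lt_cm).
  by case: ifP => [_ | /negbT //]; rewrite (gtn_eqF lt_cm).
apply/colorableP; exists h => [v | u v _ _].
  rewrite ltnS /h; do 3?case: ifP => _;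
  by rewrite ?leqnn ?(ltnW lt_cm) ?(ltnW (fm v)).
have [-> | ux] := eqVneq u x; first by rewrite hx eq_sym; exact: nbr_x.
have [-> | vx] := eqVneq v x; first by rewrite hx e_sym; exact: nbr_x.
have [-> | ua] := eqVneq u a; first by rewrite ha eq_sym; exact: nbr_a.
have [-> | va] := eqVneq v a; first by rewrite ha e_sym; exact: nbr_a.
move=> euv.
have fuv : f u != f v by apply: fP; rewrite ?outside.
rewrite /h (negbTE ux) (negbTE vx) (negbTE ua) (negbTE va).
case: ifP => [/andP [_ /eqP fuc] | _]; case: ifP => [/andP [_ /eqP fvc] | _].
- by move: fuv; rewrite fuc fvc eqxx.
- by rewrite (gtn_eqF (fm v)).
- by rewrite (ltn_eqF (fm u)).
- exact: fuv.
Qed.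

End Colourings.

Lemma no_isolated_Aset (T : finType) (e : rel T) (x y : T) :
  simple_graph e -> double_critical e -> e x y -> no_isolated e (Aset e x y).
Proof.
move=> [e_sym e_irr] [_ e_dc] exy a aA; apply/exists_inP.
apply: contraT => /exists_inPn a_isolated.
move: (aA); rewrite !inE negb_or => /andP [/andP [neq_ay nya] exa].
have /colorableP [f fm fP] : colorable e (~: [set x; a]) (chiG e - 2).
  exact: colorable_le (e_dc x a exa) (chi_colorable _ e_irr).
have neq_xa : x != a by apply: contraTneq exa => ->; rewrite e_irr.
have yD : y \in ~: [set x; a].
  rewrite !inE negb_or (eq_sym y a) neq_ay andbT.
  by apply: contraTneq exy => ->; rewrite e_irr.
have : colorable e [set: T] (chiG e - 2).+1.
  apply: (colorable_recolour e_sym e_irr neq_xa (fm y) fm fP) => v vD exv eav.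
  have neq_vy : v != y by apply: contraTneq eav => ->; rewrite e_sym.
  apply: contraTneq eav => fvy.
  have nyv : ~~ e y v by apply/negP => /(fP y v yD vD); rewrite fvy eqxx.
  by apply: a_isolated; rewrite !inE negb_or neq_vy nyv.
move/chi_min; rewrite -/(chiG e).
by move: (fm y); case: (chiG e) => [|[|k]] //; rewrite subn2 ltnn.
Qed.

Theorem proposition9 (T : finType) (e : rel T) (k : nat) (x y : T) :
  simple_graph e -> chiG e = k -> double_critical e -> ~ complete e ->
  e x y ->
  (Aset e x y != set0 -> no_isolated e (Aset e x y)) /\
  (Cset e x y != set0 -> no_isolated e (Cset e x y)).
Proof.
move=> e_simple _ e_dc _ exy; split=> _; first exact: no_isolated_Aset.
have -> : Cset e x y = Aset e y x by [].
by apply: no_isolated_Aset => //; case: e_simple => e_sym _; rewrite e_sym.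
Qed.
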